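(* Let $(\mathcal{X},\mu)$ be a probability space without atoms. Let $\Psi:(0,1]\to\mathbb{R}_+$ satisfy the following: - $\Psi(1)>0$ and $\Psi$ is decreasing; - $\psi(s):=s\Psi(s)$ is increasing and $\psi(0_+)=0$; - $\int_0\frac{ds}{s\Psi(s)}<\infty$; - $t\mapsto\Psi(e^{-t})$ is convex near $\infty$. Then there exists a function $\alpha$ on $[1,\infty)$ such that $t\mapsto t\alpha(t)>0$ is increasing on $[1,\infty)$, $$\int_1^\infty\frac{dt}{t\alpha(t)}<\infty,$$ and $$\alpha\Big(\frac{\|f\|_*}{\|f\|_1}\Big)\|f\|_*\le\|f\|_{\Lambda_\psi}$$ for all measurable $f$ for which the left-hand side is defined.
   Context: Norms: for a measurable $f$ let $N_f(t)=\mu\{x:|f(x)|>t\}$ and $\|f\|_1=\int|f|\,d\mu$. The Lorentz norm is $$\|f\|_{\Lambda_\psi}=\int_0^\infty\psi(N_f(t))\,dt,$$ equivalently $\int_0^1f^*(s)\,d\psi(s)$, where $f^*$ is the decreasing rearrangement of $|f|$. The norm $\|f\|_*$ is $\|f\|_{\Lambda_{\psi_0}}$ with $\psi_0(s)=s\ln(e/s)$. Note that $\|f\|_*\ge\|f\|_1$. *)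

From HB Require Import structures.
From mathcomp Require Import all_boot all_order all_algebra.
From mathcomp Require Import all_classical all_reals all_analysis.
Set Implicit Arguments. Unset Strict Implicit. Unset Printing Implicit Defensive.
Import Order.TTheory GRing.Theory Num.Theory.
Import numFieldNormedType.Exports.
Local Open Scope classical_set_scope.
Local Open Scope ring_scope.

Definition atomless d (T : measurableType d) (R : realType)
  (mu : {measure set T -> \bar R}) : Prop :=
  forall A : set T, measurable A -> (0 < mu A)%E ->
    exists B : set T, [/\ measurable B, B `<=` A, (0 < mu B)%E & (mu B < mu A)%E].

(* distribution function N_f(t) = mu{ |f| > t } (finite for a probability) *)
Definition distr_fun d (T : measurableType d) (R : realType)
  (mu : probability T R) (f : T -> R) (t : R) : R :=
  fine (mu [set x | t < `|f x|]).

(* psi extended by psi(0) = 0 (the value psi(0+) = 0) *)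
Definition psi_of (R : realType) (Psi : R -> R) (s : R) : R :=
  if s <= 0 then 0 else s * Psi s.

Definition lorentz_norm d (T : measurableType d) (R : realType)
  (mu : probability T R) (psi : R -> R) (f : T -> R) : \bar R :=
  (\int[lebesgue_measure]_(t in `[0%R, +oo[%classic) (psi (distr_fun mu f t))%:E)%E.

Definition psi0 (R : realType) (s : R) : R :=
  if s <= 0 then 0 else s * ln (expR 1 / s).

Definition star_norm d (T : measurableType d) (R : realType)
  (mu : probability T R) (f : T -> R) : \bar R :=
  lorentz_norm mu (@psi0 R) f.

Definition L1_norm d (T : measurableType d) (R : realType)
  (mu : probability T R) (f : T -> R) : \bar R :=
  (\int[mu]_x (`|f x|)%:E)%E.

From HB Require Import structures.
From mathcomp Require Import all_boot all_order all_algebra.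
From mathcomp Require Import all_classical all_reals all_analysis.
From mathcomp Require Import ring lra measurable_realfun.
Set Implicit Arguments.
Unset Strict Implicit.
Unset Printing Implicit Defensive.
Import Order.TTheory GRing.Theory Num.Theory.
Import numFieldNormedType.Exports.
Local Open Scope classical_set_scope.
Local Open Scope ring_scope.

(* Put phi(u) = Psi(e^-u): it is positive, nondecreasing and convex on
   [T0, +oo[.  By the layer-cake formula, ||f||_1, ||f||_* and
   ||f||_{Lambda_psi} are the integrals over t >= 0 of a, a (1 + u) and
   a phi(u), where a = N_f(t) = e^-u.  A supporting line of phi at m = r - 1,
   with r = ||f||_* / ||f||_1, bounds a phi(u) below by an affine combination
   of a and a (1 + u); after integration its slope terms cancel, leaving
   ||f||_{Lambda_psi} >= kappa phi(r - 1) ||f||_1 = alpha(r) ||f||_*.  The factor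
   kappa = Psi(1) / phi(max T0 0) absorbs the region where phi need not be
   convex, and 1/(t alpha(t)) is integrable because both it and
   1/(s Psi(s)) on ]0, 1] compare with the series of the 1/phi(n). *)

Section monotone_integrals.
Context {R : realType}.
Local Notation lebesgue := (@lebesgue_measure R).

Lemma itv_nonincreasing_measurable (i : interval R) (f : R -> R) :
  {in i &, forall s t, s <= t -> f t <= f s} ->
  measurable_fun [set` i] f.
Proof.
move=> f_ni.
apply: (measurability (@RGenCInfty.G R)) => [|/= _ [_] [r] -> <-].
  exact: RGenCInfty.measurableE.
apply: is_interval_measurable => s t/= [si fs] [ti ft] u /andP[su ut].
have iu : [set` i] u by apply: (interval_is_interval si ti); rewrite su ut.
split => //; move: fs ft; rewrite /= !in_itv/= !andbT => fs ft.
by rewrite (le_trans ft)// f_ni.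
Qed.

Lemma itv_bnd_infty_bigcup_unit (a : R) :
  `[a, +oo[%classic = \bigcup_n `[a + n%:R, a + n.+1%:R[%classic.
Proof.
apply/seteqP; split => t /=.
  rewrite in_itv /= andbT => at_; exists (Num.trunc (t - a)) => //=.
  have := @truncn_itv R (t - a); rewrite subr_ge0 => /(_ at_) /andP[lo hi].
  by rewrite in_itv /= -natr1; rewrite -natr1 in hi; apply/andP; split; lra.
move=> [n _]; rewrite /= !in_itv /= andbT => /andP[an _].
by apply: le_trans an; rewrite lerDl.
Qed.

Lemma trivIset_itv_unit (a : R) :
  trivIset setT (fun n => `[a + n%:R, a + n.+1%:R[%classic).
Proof.
apply: ltn_trivIset => n m mn; apply/seteqP; split => // t [].
rewrite /= !in_itv /= => /andP[_ hi] /andP[lo _].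
by have := le_lt_trans lo hi; rewrite ltrD2l ltr_nat ltnS leqNgt mn.
Qed.

Lemma trivIset_itv_expN :
  trivIset setT (fun n => `]expR (- n.+1%:R), expR (- n%:R)]%classic : set R).
Proof.
apply: ltn_trivIset => n m mn; apply/seteqP; split => // s [].
rewrite /= !in_itv /= => /andP[lo _] /andP[_ hi].
by have := lt_le_trans lo hi; rewrite ltr_expR ltrN2 ltr_nat ltnS leqNgt mn.
Qed.

Lemma ge0_integral_itv_bnd_infty_le_series (a : R) (g : R -> R) :
  {in `[a, +oo[ &, forall s t, s <= t -> g t <= g s} ->
  (forall t, a <= t -> 0 <= g t) ->
  (\int[lebesgue]_(t in `[a, +oo[) (g t)%:E
     <= \sum_(n <oo) (g (a + n%:R))%:E)%E.
Proof.
move=> g_ni g0.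
have Fa n t : `[a + n%:R, a + n.+1%:R[%classic t -> a <= t.
  by rewrite /= in_itv /= => /andP[+ _]; apply: le_trans; rewrite lerDl.
have mg : measurable_fun `[a, +oo[%classic (fun t => (g t)%:E).
  by apply/measurable_EFinP; exact: itv_nonincreasing_measurable.
rewrite itv_bnd_infty_bigcup_unit ge0_integral_bigcup //; first last.
- exact: trivIset_itv_unit.
- by move=> t [n _ /Fa /g0]; rewrite lee_fin.
- by rewrite -itv_bnd_infty_bigcup_unit.
apply: lee_nneseries => n _.
  by move=> _; apply: integral_ge0 => t /Fa /g0; rewrite lee_fin.
have -> : (g (a + n%:R))%:E =
    (\int[lebesgue]_(t in `[(a + n%:R)%R, (a + n.+1%:R)%R[) (g (a + n%:R))%:E)%E.
  rewrite integral_cst //.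
  have := @lebesgue_measure_itv R `[a + n%:R, a + n.+1%:R[.
  rewrite /= lte_fin ltrD2l ltr_nat ltnSn => ->.
  rewrite -EFinD -natr1.
  have -> : a + (n%:R + 1) - (a + n%:R) = 1 by ring.
  by rewrite mule1.
apply: ge0_le_integral => //.
- by move=> t /Fa /g0; rewrite lee_fin.
- by apply: measurable_funS mg => // t /Fa; rewrite /= in_itv /= andbT.
- move=> t Ft; rewrite lee_fin; apply: g_ni; rewrite ?in_itv /= ?andbT.
  + by rewrite lerDl.
  + exact: Fa Ft.
  + by move: Ft; rewrite /= in_itv /= => /andP[].
Qed.

Lemma series_le_ge0_integral_itv01 (h : R -> R) :
  {in `]0, 1] &, forall s t, s <= t -> h t <= h s} ->
  (forall s, 0 < s <= 1 -> 0 <= h s) ->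
  (\sum_(n <oo) ((expR (- n%:R) - expR (- n.+1%:R)) * h (expR (- n%:R)))%:E
     <= \int[lebesgue]_(s in `]0%R, 1%R]) (h s)%:E)%E.
Proof.
move=> h_ni h0.
pose E n : set R := `]expR (- n.+1%:R), expR (- n%:R)]%classic.
have mE n : measurable (E n) by exact: measurable_itv.
have expN_01 (n : nat) : 0 < expR (- n%:R : R) <= 1.
  by rewrite expR_gt0 expR_le1 oppr_le0 ler0n.
have E01 n s : E n s -> 0 < s <= 1.
  rewrite /E /= in_itv /= => /andP[lo hi]; rewrite (lt_trans (expR_gt0 _) lo).
  by case/andP: (expN_01 n) => _; exact: le_trans hi.
have mh : measurable_fun (`]0, 1]%classic : set R) (fun s => (h s)%:E).
  by apply/measurable_EFinP; exact: itv_nonincreasing_measurable.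
apply: (le_trans (y := \int[lebesgue]_(s in \bigcup_n E n) (h s)%:E)%E); last first.
  apply: ge0_subset_integral => //; first exact: bigcupT_measurable.
  by move=> s [n _ /E01]; rewrite /= in_itv.
rewrite ge0_integral_bigcup //; first last.
- exact: trivIset_itv_expN.
- by move=> s [n _ /E01 /h0]; rewrite lee_fin.
- by apply: measurable_funS mh => // s [n _ /E01]; rewrite /= in_itv.
apply: lee_nneseries => n _.
  move=> _; rewrite lee_fin mulr_ge0 ?h0 //.
  by rewrite subr_ge0 ler_expR lerN2 ler_nat.
apply: (le_trans (y := \int[lebesgue]_(s in E n) (cst (h (expR (- n%:R)))%:E) s)%E).
  rewrite integral_cst //; last exact: mE.
  have := @lebesgue_measure_itv R `]expR (- n.+1%:R), expR (- n%:R)].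
  rewrite /= lte_fin ltr_expR ltrN2 ltr_nat ltnSn => ->.
  by rewrite -EFinD -EFinM mulrC.
apply: ge0_le_integral => //.
- exact: mE.
- by move=> s _; rewrite lee_fin h0.
- by apply: measurable_funS mh => // s /E01; rewrite /= in_itv.
- move=> s Es; rewrite lee_fin; apply: h_ni; rewrite ?in_itv /= ?expN_01 //.
    exact: E01 Es.
  by move: Es; rewrite /E /= in_itv /= => /andP[].
Qed.

End monotone_integrals.

Lemma ge0_integral_combination d (T : measurableType d) (R : realType)
    (mu : {measure set T -> \bar R}) (D : set T) (a b : R) (f g : T -> R) :
  measurable D -> 0 <= a -> 0 <= b ->
  (forall x, D x -> 0 <= f x) -> (forall x, D x -> 0 <= g x) ->
  measurable_fun D f -> measurable_fun D g ->
  (\int[mu]_(x in D) (a * f x + b * g x)%:E =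
   a%:E * \int[mu]_(x in D) (f x)%:E + b%:E * \int[mu]_(x in D) (g x)%:E)%E.
Proof.
move=> mD a0 b0 f0 g0 mf mg.
have mf' : measurable_fun D (EFin \o f) by apply/measurable_EFinP.
have mg' : measurable_fun D (EFin \o g) by apply/measurable_EFinP.
have f0' x : D x -> (0 <= (f x)%:E)%E by move/f0; rewrite lee_fin.
have g0' x : D x -> (0 <= (g x)%:E)%E by move/g0; rewrite lee_fin.
under eq_integral => x _ do rewrite EFinD 2!EFinM.
rewrite ge0_integralD //; first last.
- exact: measurable_funeM.
- by move=> x /g0' g0x; rewrite mule_ge0.
- exact: measurable_funeM.
- by move=> x /f0' f0x; rewrite mule_ge0.
by rewrite !ge0_integralZl_EFin.
Qed.

Section convex_supporting_line.
Context {R : realType} (phi : R -> R) (a : R).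
Hypothesis phi_convex : forall x y l, a <= x -> a <= y -> 0 <= l <= 1 ->
  phi (l * x + (1 - l) * y) <= l * phi x + (1 - l) * phi y.

Lemma convex_slope_le x m y : a <= x -> x < m -> m < y ->
  (y - m) * (phi m - phi x) <= (m - x) * (phi y - phi m).
Proof.
move=> ax xm my.
have yx : 0 < y - x by lra.
pose l := (y - m) / (y - x).
have l01 : 0 <= l <= 1 by rewrite divr_ge0 ?ler_pdivrMr //=; lra.
have m_conv : l * x + (1 - l) * y = m by rewrite /l; field; lra.
have ay : a <= y by lra.
have := phi_convex ax ay l01; rewrite m_conv => /(ler_wpM2l (ltW yx)).
have -> : (y - x) * (l * phi x + (1 - l) * phi y) = (y - m) * phi x + (m - x) * phi y.
  by rewrite /l; field; lra.
nra.
Qed.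

Hypothesis phi_nondecreasing : forall x y, a <= x -> x <= y -> phi x <= phi y.

Lemma nondecreasing_convex_supporting_line m : a < m ->
  exists2 k, 0 <= k & forall y, a <= y -> phi m + k * (y - m) <= phi y.
Proof.
move=> am.
pose slope x := (phi m - phi x) / (m - x).
pose S := [set slope x | x in [set x | a <= x < m]].
have S_a : S (slope a) by exists a => //=; rewrite lexx am.
have slope_le x y : a <= x < m -> m < y -> slope x <= (phi y - phi m) / (y - m).
  case/andP => ax xm my; rewrite /slope ler_pdivrMr; last lra.
  rewrite mulrAC ler_pdivlMr; last lra.
  have := convex_slope_le ax xm my; nra.
have supS : has_sup S.
  split; first by exists (slope a).
  exists ((phi (m + 1) - phi m) / (m + 1 - m)) => _ [x xS <-].
  by apply: slope_le => //; lra.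
exists (sup S).
  apply: le_trans (sup_upper_bound supS S_a).
  by rewrite divr_ge0 // subr_ge0; [apply: phi_nondecreasing|]; lra.
move=> y ay; have [ym|my|->] := ltgtP y m.
- have : slope y <= sup S by apply: sup_upper_bound => //; exists y => //=; rewrite ay ym.
  rewrite /slope ler_pdivrMr; last lra.
  nra.
- have : sup S <= (phi y - phi m) / (y - m).
    apply: ge_sup; first by exists (slope a).
    by move=> _ [x xS <-]; exact: slope_le.
  rewrite ler_pdivlMr; last lra.
  nra.
- by rewrite subrr mulr0 addr0.
Qed.

End convex_supporting_line.

Section psi0.
Context {R : realType}.

Lemma psi0E (s : R) : 0 < s -> psi0 s = s * (1 - ln s).
Proof.
by move=> s0; rewrite /psi0 leNgt s0 /= ln_div ?posrE ?expR_gt0 // expRK.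
Qed.

Lemma psi0_ge (s : R) : 0 <= s <= 1 -> s <= psi0 s.
Proof.
case/andP => s0 s1; have [sp|s_le0] := ltP 0 s; last by rewrite /psi0 s_le0.
by rewrite psi0E //; have := ln_le0 s1; nra.
Qed.

Lemma psi0_ge0 (s : R) : s <= 1 -> 0 <= psi0 s.
Proof.
move=> s1; have [sp|s_le0] := ltP 0 s; last by rewrite /psi0 s_le0.
by apply: (le_trans (ltW sp)); apply: psi0_ge; rewrite ltW.
Qed.

Lemma psi0_le (s t : R) : 0 <= s -> s <= t -> t <= 1 -> psi0 s <= psi0 t.
Proof.
move=> s0 st t1; have [sp|s_le0] := ltP 0 s; last first.
  by rewrite {1}/psi0 s_le0; exact: psi0_ge0.
have tp : 0 < t by lra.
rewrite !psi0E //.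
have ts_gt0 : 0 < t / s by exact: divr_gt0.
have : ln (t / s) <= t / s - 1.
  by have := @le_ln1Dx R (t / s - 1); rewrite (addrC 1) subrK; apply; lra.
rewrite ln_div ?posrE // => /(ler_wpM2l (ltW sp)).
have -> : s * (t / s - 1) = t - s by field; rewrite gt_eqF.
have := ln_le0 t1; nra.
Qed.

End psi0.

Section distribution_function.
Context d (T : measurableType d) (R : realType) (mu : probability T R).
Variable f : T -> R.

Definition normf x := `|f x|.

Lemma distr_fun_ge0 t : 0 <= distr_fun mu f t.
Proof. by rewrite /distr_fun fine_ge0. Qed.

Let distr_fun_setE t : [set x | t < `|f x|] = normf @^-1` `]t, +oo[.
Proof. by apply/seteqP; split => x /=; rewrite in_itv /= andbT. Qed.

Hypothesis mf : measurable_fun setT f.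

Let mnormf : measurable_fun setT normf.
Proof. exact: measurableT_comp. Qed.

HB.instance Definition _ := isMeasurableFun.Build _ _ _ _ normf mnormf.

Let mdistr_fun_set t : measurable [set x | t < `|f x|].
Proof. by rewrite distr_fun_setE -[X in measurable X]setTI; exact: mnormf. Qed.

Lemma distr_fun_le1 t : distr_fun mu f t <= 1.
Proof.
by rewrite /distr_fun -lee_fin fineK ?fin_num_measure // probability_le1.
Qed.

Lemma distr_fun_le s t : s <= t -> distr_fun mu f t <= distr_fun mu f s.
Proof.
move=> st; rewrite /distr_fun fine_le ?fin_num_measure //.
by apply: le_measure; rewrite ?inE // => x /=; apply: le_lt_trans.
Qed.

Lemma L1_norm_layer_cake : L1_norm mu f =
  (\int[lebesgue_measure]_(t in `[0%R, +oo[) (distr_fun mu f t)%:E)%E.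
Proof.
have := @ge0_expectation_ccdf _ _ R mu normf (fun x => normr_ge0 _).
rewrite expectation_def /L1_norm => ->.
apply: eq_integral => t _.
by rewrite /distr_fun /ccdf fineK ?fin_num_measure // distr_fun_setE.
Qed.

End distribution_function.

Section Psi_expN.
Context {R : realType} (Psi : R -> R).
Hypothesis Psi1_gt0 : 0 < Psi 1.
Hypothesis Psi_nonincr : forall s t, 0 < s -> s <= t -> t <= 1 -> Psi t <= Psi s.
Hypothesis psi_nondecr : forall s t, 0 < s -> s <= t -> t <= 1 -> s * Psi s <= t * Psi t.

Definition Psi_expN (u : R) : R := Psi (expR (- u)).

Lemma Psi_gt0 s : 0 < s <= 1 -> 0 < Psi s.
Proof. by case/andP => s0 s1; apply: lt_le_trans Psi1_gt0 _; exact: Psi_nonincr. Qed.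

Let expN_01 (u : R) : 0 <= u -> 0 < expR (- u) <= 1.
Proof. by move=> u0; rewrite expR_gt0 expR_le1 oppr_le0. Qed.

Lemma Psi_expN_ge u : 0 <= u -> Psi 1 <= Psi_expN u.
Proof. by move=> /expN_01 /andP[? ?]; exact: Psi_nonincr. Qed.

Lemma Psi_expN_gt0 u : 0 <= u -> 0 < Psi_expN u.
Proof. by move=> /Psi_expN_ge; exact: lt_le_trans. Qed.

Lemma Psi_expN_le u v : 0 <= u -> u <= v -> Psi_expN u <= Psi_expN v.
Proof.
move=> u0 uv; apply: Psi_nonincr; first exact: expR_gt0.
  by rewrite ler_expR lerN2.
by case/andP: (expN_01 u0).
Qed.

Lemma psi_of_le a b : 0 <= a -> a <= b -> b <= 1 -> psi_of Psi a <= psi_of Psi b.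
Proof.
move=> a0 ab b1; rewrite /psi_of.
have [b_le0|b_gt0] := leP b 0; first by rewrite (_ : a <= 0) //; lra.
case: ifPn => [_|]; last by rewrite -ltNge => a_gt0; exact: psi_nondecr.
by rewrite mulr_ge0 ?ltW // Psi_gt0 // b_gt0.
Qed.

Lemma psi_of_ge a : 0 <= a <= 1 -> Psi 1 * a <= psi_of Psi a.
Proof.
case/andP => a0 a1; rewrite /psi_of.
have [a_le0|a_gt0] := leP a 0; first by rewrite (_ : a = 0) ?mulr0 //; lra.
by rewrite mulrC; apply: ler_wpM2l => //; exact: Psi_nonincr.
Qed.

Lemma psi_of_ge_affine (c k m a : R) :
  (forall u, 0 <= u -> c + k * (u - m) <= Psi_expN u) -> 0 <= a <= 1 ->
  c * a + k * psi0 a <= psi_of Psi a + k * (m + 1) * a.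
Proof.
move=> affine_le /andP[a0 a1].
have [a_le0|a_gt0] := leP a 0.
  have -> : a = 0 by lra.
  by rewrite /psi0 /psi_of lexx !mulr0 !addr0.
have u0 : 0 <= - ln a by rewrite oppr_ge0 ln_le0.
have ea : expR (- - ln a) = a by rewrite opprK lnK.
have psi_ofE : psi_of Psi a = a * Psi_expN (- ln a).
  by rewrite /psi_of leNgt a_gt0 /Psi_expN ea.
rewrite psi_ofE psi0E //; have := affine_le _ u0; nra.
Qed.

Lemma series_inv_Psi_expN_lt :
  (\int[lebesgue_measure]_(s in `]0%R, 1%R]) ((s * Psi s)^-1)%:E < +oo)%E ->
  (\sum_(n <oo) ((Psi_expN n%:R)^-1)%:E < +oo)%E.
Proof.
move=> int_lt.
have c_gt0 : 0 < 1 - expR (-1) :> R by rewrite subr_gt0 expR_lt1 oppr_lt0.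
have sum_le : (\sum_(n <oo) ((1 - expR (-1))%:E * ((Psi_expN n%:R)^-1)%:E)
    <= \int[lebesgue_measure]_(s in `]0%R, 1%R]) ((s * Psi s)^-1)%:E)%E.
  apply: le_trans (@series_le_ge0_integral_itv01 _ (fun s => (s * Psi s)^-1) _ _);
    last 2 first.
  - move=> s t /[!in_itv] /= /andP[s0 s1] /andP[t0 t1] st.
    by rewrite lef_pV2 ?posrE ?psi_nondecr // mulr_gt0 // Psi_gt0 // ?s0 ?t0.
  - by move=> s s01; rewrite invr_ge0 mulr_ge0 ?ltW ?Psi_gt0 //; case/andP: s01.
  apply: lee_nneseries => n _.
    by move=> _; rewrite -EFinM lee_fin mulr_ge0 ?ltW // invr_gt0 Psi_expN_gt0.
  have -> : expR (- n.+1%:R) = expR (- n%:R) * expR (-1) :> R.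
    by rewrite -natr1 opprD expRD.
  have := expR_gt0 (- n%:R : R); have := Psi_expN_gt0 (ler0n R n).
  rewrite /Psi_expN => phi_n_gt0 expN_gt0.
  have -> : (expR (- n%:R) - expR (- n%:R) * expR (-1)) * (expR (- n%:R) *
      Psi (expR (- n%:R)))^-1 = (1 - expR (-1)) * (Psi (expR (- n%:R)))^-1.
    by field; rewrite !gt_eqF.
  by rewrite EFinM.
have := le_lt_trans sum_le int_lt.
rewrite nneseriesZl; last by move=> n _; rewrite lee_fin invr_ge0 ltW ?Psi_expN_gt0.
by rewrite !ltey; apply: contra_neq => ->; rewrite gt0_muley ?lte_fin.
Qed.

Lemma integral_inv_Psi_expN_lt c : 0 < c ->
  (\int[lebesgue_measure]_(s in `]0%R, 1%R]) ((s * Psi s)^-1)%:E < +oo)%E ->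
  (\int[lebesgue_measure]_(t in `[1%R, +oo[)
     ((c * Psi_expN (Num.max (t - 1) 0))^-1)%:E < +oo)%E.
Proof.
move=> c0 /series_inv_Psi_expN_lt series_lt.
have max_ge0 (t : R) : 0 <= Num.max (t - 1) 0 by rewrite le_max lexx orbT.
apply: le_lt_trans (@ge0_integral_itv_bnd_infty_le_series _ 1
  (fun t => (c * Psi_expN (Num.max (t - 1) 0))^-1) _ _) _.
- move=> s t /[!in_itv] /= /[!andbT] s1 t1 st.
  rewrite lef_pV2 ?posrE ?mulr_gt0 ?Psi_expN_gt0 // ler_pM2l // Psi_expN_le //.
  by rewrite !max_l ?subr_ge0 //; lra.
- by move=> t _; rewrite invr_ge0 ltW // mulr_gt0 // Psi_expN_gt0.
under eq_eseriesr => n _ do rewrite /= (addrC 1) addrK max_l ?ler0n // invfM EFinM.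
rewrite nneseriesZl; last by move=> n _; rewrite lee_fin invr_ge0 ltW ?Psi_expN_gt0.
by rewrite lte_mul_pinfty // lee_fin invr_ge0 ltW.
Qed.

End Psi_expN.

Section lorentz_lower_bound.
Context {R : realType} (Psi : R -> R).
Hypothesis Psi1_gt0 : 0 < Psi 1.
Hypothesis Psi_nonincr : forall s t, 0 < s -> s <= t -> t <= 1 -> Psi t <= Psi s.
Hypothesis psi_nondecr : forall s t, 0 < s -> s <= t -> t <= 1 -> s * Psi s <= t * Psi t.
Variable T0 : R.
Hypothesis Psi_expN_convex : forall x y l, T0 <= x -> T0 <= y -> 0 <= l <= 1 ->
  Psi_expN Psi (l * x + (1 - l) * y)
    <= l * Psi_expN Psi x + (1 - l) * Psi_expN Psi y.

Local Notation phi := (Psi_expN Psi).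
Local Notation u0 := (Num.max T0 0).

Definition kappa : R := Psi 1 / phi u0.

Let u0_ge0 : 0 <= u0. Proof. by rewrite le_max lexx orbT. Qed.

Let T0_le_u0 : T0 <= u0. Proof. by rewrite le_max lexx. Qed.

Let phi_u0_gt0 : 0 < phi u0. Proof. exact: Psi_expN_gt0. Qed.

Lemma kappa_gt0 : 0 < kappa.
Proof. by rewrite divr_gt0. Qed.

Lemma kappa_le1 : kappa <= 1.
Proof. by rewrite ler_pdivrMr // mul1r; exact: Psi_expN_ge. Qed.

Lemma kappa_phi_u0 : kappa * phi u0 = Psi 1.
Proof. by rewrite divfK // gt_eqF. Qed.

Lemma Psi_expN_affine_minorant m : 0 <= m ->
  exists2 k, 0 <= k & forall u, 0 <= u -> kappa * phi m + k * (u - m) <= phi u.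
Proof.
move=> m0; have [m_le|u0_lt] := leP m u0.
  exists 0 => // u u_ge0; rewrite mul0r addr0.
  apply: le_trans (Psi_expN_ge Psi_nonincr u_ge0).
  rewrite -kappa_phi_u0 ler_pM2l ?kappa_gt0 //; exact: Psi_expN_le.
have [k k0 supporting] : exists2 k, 0 <= k &
    forall y, u0 <= y -> phi m + k * (y - m) <= phi y.
  apply: nondecreasing_convex_supporting_line u0_lt => [x y l x_ge y_ge l01|x y x_ge xy].
    by apply: Psi_expN_convex => //; exact: le_trans T0_le_u0 _.
  exact: Psi_expN_le (le_trans u0_ge0 x_ge) xy.
exists (kappa * k); first exact: mulr_ge0 (ltW kappa_gt0) k0.
have kap0 := kappa_gt0; have kap1 := kappa_le1.
move=> u u_ge0; have [u0_le|u_lt] := leP u0 u.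
  have := supporting _ u0_le; have := Psi_expN_gt0 Psi1_gt0 Psi_nonincr u_ge0; nra.
have supp_u0 := supporting _ (lexx _).
have : kappa * k * (u - m) <= kappa * k * (u0 - m).
  by apply: ler_wpM2l; [exact: mulr_ge0 (ltW kap0) k0 | lra].
have := Psi_expN_ge Psi_nonincr u_ge0; have := kappa_phi_u0; nra.
Qed.

Section layer_integrals.
Variable N : R -> R.
Hypothesis N_ge0 : forall t, 0 <= N t.
Hypothesis N_le1 : forall t, N t <= 1.
Hypothesis N_le : forall s t, s <= t -> N t <= N s.

Local Notation D := (`[0%R, +oo[%classic : set R).
Local Notation "\int_D F" := (\int[lebesgue_measure]_(t in D) (F t)%:E)%E
  (at level 10, F at level 8).

Let N01 t : 0 <= N t <= 1. Proof. by rewrite N_ge0 N_le1. Qed.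

Let measurable_comp_N (F : R -> R) :
  (forall a b, 0 <= a -> a <= b -> b <= 1 -> F a <= F b) ->
  measurable_fun D (fun t => F (N t)).
Proof.
move=> F_le; apply: (@itv_nonincreasing_measurable R `[0, +oo[) => s t _ _ st.
by apply: F_le; rewrite ?N_ge0 ?N_le1 ?N_le.
Qed.

Let mN : measurable_fun D N.
Proof. exact: (@measurable_comp_N id). Qed.

Let mpsi0N : measurable_fun D (fun t => psi0 (N t)).
Proof. exact: measurable_comp_N (@psi0_le R). Qed.

Let mpsiN : measurable_fun D (fun t => psi_of Psi (N t)).
Proof. exact: measurable_comp_N (psi_of_le Psi1_gt0 Psi_nonincr psi_nondecr). Qed.

Let psiN_ge0 t : 0 <= psi_of Psi (N t).
Proof.
apply: le_trans (psi_of_ge Psi_nonincr (N01 t)).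
exact: mulr_ge0 (ltW Psi1_gt0) (N_ge0 t).
Qed.

Lemma integral_le_integral_psi0 : (\int_D N <= \int_D (fun t => psi0 (N t)))%E.
Proof.
apply: ge0_le_integral.
- exact: measurable_itv.
- by move=> t _; rewrite lee_fin.
- exact/measurable_EFinP.
- exact/measurable_EFinP.
- by move=> t _; rewrite lee_fin psi0_ge.
Qed.

Lemma integral_psi_of_ge_affine (c k m l : R) : 0 <= c -> 0 <= k -> 0 <= m + 1 ->
  (forall u, 0 <= u -> c + k * (u - m) <= phi u) ->
  \int_D N = l%:E -> \int_D (fun t => psi0 (N t)) = ((m + 1) * l)%:E ->
  ((c * l)%:E <= \int_D (fun t => psi_of Psi (N t)))%E.
Proof.
move=> c0 k0 m1 affine_le NE psi0NE.
have mD : measurable D by exact: measurable_itv.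
have km1 : 0 <= k * (m + 1) by exact: mulr_ge0.
have := @ge0_integral_combination _ _ _ lebesgue_measure D c k
  N (fun t => psi0 (N t)) mD c0 k0 (fun t _ => N_ge0 t)
  (fun t _ => psi0_ge0 (N_le1 t)) mN mpsi0N.
have := @ge0_integral_combination _ _ _ lebesgue_measure D 1 (k * (m + 1))
  (fun t => psi_of Psi (N t)) N mD ler01 km1 (fun t _ => psiN_ge0 t)
  (fun t _ => N_ge0 t) mpsiN mN.
rewrite NE psi0NE mul1e => combE2 combE1.
have : (\int_D (fun t => c * N t + k * psi0 (N t))
        <= \int_D (fun t => 1 * psi_of Psi (N t) + k * (m + 1) * N t))%E.
  apply: ge0_le_integral => //.
  - by move=> t _; rewrite lee_fin addr_ge0 ?mulr_ge0 ?psi0_ge0.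
  - by apply/measurable_EFinP; apply: measurable_funD; apply: measurable_funM.
  - by apply/measurable_EFinP; apply: measurable_funD; apply: measurable_funM.
  - by move=> t _; rewrite lee_fin mul1r; exact: psi_of_ge_affine.
rewrite combE1 combE2 -!EFinM.
have -> : k * ((m + 1) * l) = k * (m + 1) * l by rewrite mulrA.
by rewrite leeD2rE.
Qed.

Lemma lorentz_integral_ge :
  let L := \int_D N in let S := \int_D (fun t => psi0 (N t)) in
  (0 < L)%E -> (S < +oo)%E ->
  ((kappa * phi (Num.max (fine S / fine L - 1) 0) / (fine S / fine L))%:E * S
     <= \int_D (fun t => psi_of Psi (N t)))%E.
Proof.
move=> L S L_gt0 S_lt.
have L_le_S : (L <= S)%E := integral_le_integral_psi0.
have [l Ll] : exists l, L = l%:E.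
  by exists (fine L); rewrite fineK // ge0_fin_numE ?ltW // (le_lt_trans L_le_S).
have [s Ss] : exists s, S = s%:E.
  by exists (fine S); rewrite fineK // ge0_fin_numE // (le_trans _ L_le_S) ?ltW.
rewrite Ll Ss /= in L_gt0 L_le_S *; rewrite lte_fin in L_gt0; rewrite lee_fin in L_le_S.
have r1 : 1 <= s / l by rewrite ler_pdivlMr // mul1r.
have m0 : 0 <= s / l - 1 by rewrite subr_ge0.
have [k k0 minorant] := Psi_expN_affine_minorant m0.
rewrite max_l // -EFinM.
have -> : kappa * phi (s / l - 1) / (s / l) * s = kappa * phi (s / l - 1) * l.
  by field; rewrite ?gt_eqF //; lra.
apply: integral_psi_of_ge_affine k0 _ minorant Ll _.
- exact: mulr_ge0 (ltW kappa_gt0) (ltW (Psi_expN_gt0 Psi1_gt0 Psi_nonincr m0)).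
- by rewrite subrK (le_trans ler01 r1).
- by rewrite subrK divfK ?gt_eqF.
Qed.

End layer_integrals.
End lorentz_lower_bound.

Theorem lemma3p6 (d : measure_display) (T : measurableType d) (R : realType)
  (mu : probability T R) (Psi : R -> R) :
  atomless mu ->
  (forall s, 0 < s <= 1 -> 0 <= Psi s) ->
  0 < Psi 1 ->
  (forall s t, 0 < s -> s <= t -> t <= 1 -> Psi t <= Psi s) ->
  (forall s t, 0 < s -> s <= t -> t <= 1 -> s * Psi s <= t * Psi t) ->
  (fun s => s * Psi s) x @[x --> 0^'+] --> 0 ->
  (\int[lebesgue_measure]_(s in `]0%R, 1%R]%classic) ((s * Psi s)^-1)%:E < +oo)%E ->
  (exists T0 : R, forall x y l, T0 <= x -> T0 <= y -> 0 <= l <= 1 ->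
     Psi (expR (- (l * x + (1 - l) * y)))
       <= l * Psi (expR (- x)) + (1 - l) * Psi (expR (- y))) ->
  exists alpha : R -> R,
    [/\ (forall t, 1 <= t -> 0 < t * alpha t),
        (forall s t, 1 <= s -> s <= t -> s * alpha s <= t * alpha t),
        (\int[lebesgue_measure]_(t in `[1%R, +oo[%classic) ((t * alpha t)^-1)%:E < +oo)%E
      & forall f : T -> R, measurable_fun setT f ->
          (0 < L1_norm mu f)%E -> (star_norm mu f < +oo)%E ->
          ((alpha (fine (star_norm mu f) / fine (L1_norm mu f)))%:E * star_norm mu f
             <= lorentz_norm mu (psi_of Psi) f)%E].
Proof.
move=> _ _ Psi1_gt0 Psi_nonincr psi_nondecr _ int_lt [T0 convex].
have kappa0 := kappa_gt0 Psi1_gt0 Psi_nonincr T0.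
pose beta t := kappa Psi T0 * Psi_expN Psi (Num.max (t - 1) 0).
have beta_gt0 t : 0 < beta t.
  by rewrite mulr_gt0 // Psi_expN_gt0 // le_max lexx orbT.
have t_alpha t : 1 <= t -> t * (beta t / t) = beta t.
  by move=> t1; rewrite mulrC divfK // gt_eqF //; lra.
exists (fun t => beta t / t); split.
- by move=> t /t_alpha ->.
- move=> s t s1 st; rewrite !t_alpha //; last lra.
  rewrite ler_pM2l // Psi_expN_le ?le_max ?lexx ?orbT //.
  by rewrite !max_l ?subr_ge0 //; lra.
- under eq_integral => t /[!inE] /= /[!in_itv] /= /[!andbT] /t_alpha -> do over.
  exact: integral_inv_Psi_expN_lt.
- move=> f mf; rewrite /star_norm /lorentz_norm L1_norm_layer_cake //.
  exact: lorentz_integral_ge (distr_fun_ge0 _ _) (distr_fun_le1 _ mf) (distr_fun_le _ mf).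
Qed.
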